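(* Let $\Gamma$ be a symmetric, folded, idempotent family of Boolean promise relations such that $\operatorname{Maj}_L\notin\operatorname{poly}(\Gamma)$ for some odd positive integer $L$. Then there is a promise relation $(P,Q)$ with $\operatorname{poly}(\Gamma)\subseteq\operatorname{poly}(P,Q)$ of one of the following two forms: either $P=\operatorname{Ham}_k(\{(k+1)/2\})$, $Q=\operatorname{Ham}_k(\{0,1,\dots,k-1\})$ for some odd $k\ge 3$; or $P=\operatorname{Ham}_k(\{1,k\})$, $Q=\operatorname{Ham}_k(\{0,1,\dots,k\}\setminus\{b\})$ for some $k\ge 3$ and $b\in\{2,\dots,k-1\}$.
   Context: Domain $\{0,1\}$. A promise relation is a pair $(P,Q)$ with $P\subseteq Q\subseteq\{0,1\}^k$. $f:\{0,1\}^L\to\{0,1\}$ is a weak polymorphism of $(P,Q)$ if for all $x^{(1)},\dots,x^{(L)}\in P$, $(f(x^{(1)}_1,\dots,x^{(L)}_1),\dots,f(x^{(1)}_k,\dots,x^{(L)}_k))\in Q$; $\operatorname{poly}(\Gamma)$ is the set of functions that are weak polymorphisms of every member of $\Gamma$. $\Gamma$ is symmetric if every relation appearing in it is invariant under coordinate permutations; folded if each $f\in\operatorname{poly}(\Gamma)$ satisfies $f(\bar x)=\neg f(x)$; idempotent if each $f\in\operatorname{poly}(\Gamma)$ satisfies $f(0,\dots,0)=0$, $f(1,\dots,1)=1$. $\operatorname{Ham}_k(S)=\{x\in\{0,1\}^k:|x|\in S\}$ where $|x|$ is the Hamming weight. For odd $L$, $\operatorname{Maj}_L(x)=1$ iff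 $\sum_i x_i>L/2$. *)

From mathcomp Require Import all_boot all_fingroup.
Set Implicit Arguments. Unset Strict Implicit. Unset Printing Implicit Defensive.

Definition btuple (k : nat) := {ffun 'I_k -> bool}.

(* A promise relation of arity k: a pair (P, Q) of sets of tuples.
   (The requirement P \subset Q is imposed separately where needed.) *)
Definition prel (k : nat) := ({set btuple k} * {set btuple k})%type.

Definition PFam := forall k : nat, prel k -> Prop.

Definition bfun (L : nat) := btuple L -> bool.

Definition hw (k : nat) (x : btuple k) : nat := \sum_(i < k) nat_of_bool (x i).

Definition Ham (k : nat) (S : pred nat) : {set btuple k} := [set x | hw x \in S].

Definition weak_poly (L k : nat) (R : prel k) (f : bfun L) : Prop :=
  forall x : 'I_L -> btuple k,
    (forall j, x j \in R.1) ->
    [ffun i : 'I_k => f [ffun j : 'I_L => x j i]] \in R.2.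

Definition in_poly (G : PFam) (L : nat) (f : bfun L) : Prop :=
  forall k (R : prel k), G k R -> weak_poly R f.

Definition is_promise (k : nat) (R : prel k) : Prop := R.1 \subset R.2.

Definition perm_tuple (k : nat) (s : 'S_k) (x : btuple k) : btuple k :=
  [ffun i => x (s i)].

Definition symmetricF (G : PFam) : Prop :=
  forall k (R : prel k), G k R ->
    forall (s : 'S_k) (x : btuple k),
      (perm_tuple s x \in R.1) = (x \in R.1) /\
      (perm_tuple s x \in R.2) = (x \in R.2).

Definition negt (L : nat) (x : btuple L) : btuple L := [ffun i => ~~ x i].

Definition foldedF (G : PFam) : Prop :=
  forall L (f : bfun L), in_poly G f -> forall x, f (negt x) = ~~ f x.

Definition idempotentF (G : PFam) : Prop :=
  forall L (f : bfun L), in_poly G f ->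
    f [ffun=> false] = false /\ f [ffun=> true] = true.

(* Maj_L(x) = 1 iff sum_i x_i > L/2, i.e. 2 * |x| > L. *)
Definition Maj (L : nat) : bfun L := fun x => L < (hw x).*2.
Arguments Maj L x : clear implicits.

(* Membership in a symmetric relation depends only on Hamming
   weight.  If Maj_L is not a weak polymorphism of some (P, Q) in the family,
   there are tuples of P with weights s_1, ..., s_L whose coordinatewise
   majority has a weight w outside Q; w differs from every s_j since P is
   contained in Q.  Padding a tuple of length m with a ones in front and zeros
   behind commutes with every idempotent polymorphism, and complementing commutes
   with every folded one, so poly(Gamma) is contained in poly(P', Q') for every
   (P', Q') obtained by pulling (P, Q) back along such maps.  If weights s_i < w
   < s_j exist (and not all s_j are 0 or k), padding realises
   (Ham_m({1, m}), Ham_m(all but b)).  Otherwise, up to complementation, every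
   s_j is below w, and counting ones column by column shows w < 2 s_j for some j;
   padding then realises (Ham_{2c+1}({c+1}), Ham_{2c+1}(all but 2c+1)) with
   c = w - s_j. *)

From mathcomp Require Import all_boot all_fingroup.
From mathcomp Require Import zify.
From Stdlib Require Import Classical.

Set Implicit Arguments.
Unset Strict Implicit.
Unset Printing Implicit Defensive.

Lemma hw_card k (x : btuple k) : hw x = #|[set i | x i]|.
Proof.
by rewrite /hw -sum1dep_card [RHS]big_mkcond /=; apply: eq_bigr => i _; case: (x i).
Qed.

Lemma hw_le k (x : btuple k) : hw x <= k.
Proof. by rewrite hw_card (leq_trans (max_card _)) ?card_ord. Qed.

Lemma hw_gt0 k (x : btuple k) i : x i -> 0 < hw x.
Proof. by move=> xi; rewrite hw_card; apply/card_gt0P; exists i; rewrite inE. Qed.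

Lemma hw_ltn k (x : btuple k) i : ~~ x i -> hw x < k.
Proof.
move=> xi; rewrite hw_card -[X in _ < X]card_ord -cardsT proper_card // properT.
by apply/eqP => /setP/(_ i); rewrite !inE (negbTE xi).
Qed.

Lemma hw_const k (b : bool) : hw ([ffun=> b] : btuple k) = b * k.
Proof.
rewrite /hw (eq_bigr (fun=> nat_of_bool b)) => [|i _]; last by rewrite ffunE.
by rewrite sum_nat_const card_ord mulnC.
Qed.

Lemma mem_Ham k (S : pred nat) (x : btuple k) : (x \in Ham k S) = S (hw x).
Proof. by rewrite inE. Qed.

Lemma negtK k : involutive (@negt k).
Proof. by move=> x; apply/ffunP => i; rewrite !ffunE negbK. Qed.

Lemma hw_negt k (x : btuple k) : hw (negt x) = k - hw x.
Proof.
rewrite !hw_card -[X in X - _]card_ord -(cardsC [set i | x i]) addKn.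
by apply: eq_card => i; rewrite !inE ffunE.
Qed.

Lemma hw_perm k (s : 'S_k) (x : btuple k) : hw (perm_tuple s x) = hw x.
Proof.
rewrite /hw [RHS](reindex_inj (@perm_inj _ s)).
by apply: eq_bigr => i _; rewrite ffunE.
Qed.

Definition hw_invariant k (A : {set btuple k}) : Prop :=
  forall x y : btuple k, hw x = hw y -> (x \in A) = (y \in A).

Lemma hw_eq_exchange k (x y : btuple k) : hw x = hw y -> x != y ->
  exists i j, [&& x i, ~~ y i, ~~ x j & y j].
Proof.
rewrite !hw_card => eq_xy neq_xy.
have supp_neq : [set i | x i] != [set i | y i].
  apply: contra neq_xy => /eqP/setP eq_supp.
  by apply/eqP/ffunP => i; move: (eq_supp i); rewrite !inE.
have [i xi] : exists i, x i && ~~ y i.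
  apply/existsP; apply: contraR supp_neq => /existsPn no_i.
  rewrite eqEcard eq_xy leqnn andbT; apply/subsetP => i; rewrite !inE.
  by move: (no_i i); case: (x i) (y i) => [] [].
have [j yj] : exists j, ~~ x j && y j.
  apply/existsP; apply: contraR supp_neq => /existsPn no_j.
  rewrite eq_sym eqEcard eq_xy leqnn andbT; apply/subsetP => j; rewrite !inE.
  by move: (no_j j); case: (x j) (y j) => [] [].
by exists i, j; case/andP: xi => -> ->; case/andP: yj => -> ->.
Qed.

(* Induction on the number of coordinates where x and y differ: a transposition
   exchanging a 1 of x missing in y with a 0 of x present in y removes two of
   them. *)
Lemma perm_invariant_hw_invariant k (A : {set btuple k}) :
  (forall (s : 'S_k) x, (perm_tuple s x \in A) = (x \in A)) -> hw_invariant A.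
Proof.
move=> A_perm x y.
move: {2}#|[set l | x l != y l]| (leqnn #|[set l | x l != y l]|) => n.
elim: n x => [|n IHn] x D_le eq_hw; set D := [set l | x l != y l] in D_le.
  move: D_le; rewrite leqn0 cards_eq0 => /eqP/setP D0.
  suff -> : x = y by [].
  by apply/ffunP => i; move: (D0 i); rewrite !inE => /negbFE/eqP.
have [->|neq_xy] := eqVneq x y; first by [].
have [i [j /and4P [xi yi xj yj]]] := hw_eq_exchange eq_hw neq_xy.
rewrite -(A_perm (tperm i j)); apply: IHn; last by rewrite hw_perm.
have Di : i \in D by rewrite inE; case: (x i) (y i) xi yi => [] [].
apply: leq_trans (_ : #|D :\ i| <= n); last by move: D_le; rewrite (cardsD1 i) Di.
apply/subset_leq_card/subsetP => l; rewrite !inE ffunE.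
case: tpermP => [->|->|/eqP nli _]; last by rewrite nli.
  by case: (x j) (y i) xj yi => [] [].
by case: (x i) (y j) xi yj => [] []; rewrite ?andbT //; case: eqP.
Qed.

Lemma hw_invariant_preim_negt k (A : {set btuple k}) :
  hw_invariant A -> hw_invariant (@negt k @^-1: A).
Proof. by move=> A_inv x y eq_xy; rewrite !inE; apply: A_inv; rewrite !hw_negt eq_xy. Qed.

Definition colwise L k (f : bfun L) (x : 'I_L -> btuple k) : btuple k :=
  [ffun i => f [ffun j => x j i]].

Lemma colwise_negt L k (f : bfun L) (x : 'I_L -> btuple k) :
  (forall v, f (negt v) = ~~ f v) ->
  colwise f (fun j => negt (x j)) = negt (colwise f x).
Proof.
move=> f_negt; apply/ffunP => i; rewrite !ffunE -f_negt.
by congr f; apply/ffunP => j; rewrite !ffunE.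
Qed.

(* The tuple 1^a z 0^(k - a - m), truncated to length k. *)
Definition pad k a m (z : btuple m) : btuple k :=
  [ffun i : 'I_k => (i < a) || oapp z false (insub (i - a))].

Lemma hw_pad k a m (z : btuple m) : a + m <= k -> hw (pad k a z) = a + hw z.
Proof.
move=> le_k; pose F n := (n < a) || oapp z false (insub (n - a)).
have -> : hw (pad k a z) = \sum_(0 <= n < k) F n.
  by rewrite big_mkord; apply: eq_bigr => i _; rewrite ffunE.
rewrite (big_cat_nat (n := a)) ?(leq_trans (leq_addr m a)) //=.
rewrite (big_cat_nat (n := a + m) (leq_addr m a) le_k) /=.
have ones : \sum_(0 <= n < a) F n = a.
  rewrite (eq_big_nat _ _ (F2 := fun=> 1)) ?sum_nat_const_nat ?muln1 ?subn0 //.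
  by move=> n /andP [_ lt_na]; rewrite /F lt_na.
have middle : \sum_(a <= n < a + m) F n = hw z.
  rewrite -{1}[a]add0n big_addn addKn big_mkord /hw.
  by apply: eq_bigr => i _; rewrite /F addnK ltnNge leq_addl /= valK.
have zeros : \sum_(a + m <= n < k) F n = 0.
  rewrite (eq_big_nat _ _ (F2 := fun=> 0)) ?sum_nat_const_nat ?muln0 // => n /andP [le_n _].
  rewrite /F insubN; last by lia.
  by have -> : n < a = false by lia.
by rewrite ones middle zeros addn0.
Qed.

Lemma colwise_pad L k a m (f : bfun L) (x : 'I_L -> btuple m) :
  f [ffun=> false] = false -> f [ffun=> true] = true ->
  colwise f (fun j => pad k a (x j)) = pad k a (colwise f x).
Proof.
move=> f0 f1; apply/ffunP => i; rewrite !ffunE.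
have -> : [ffun j => pad k a (x j) i] =
          [ffun j => (i < a) || oapp (x j) false (insub (i - a))].
  by apply/ffunP => j; rewrite !ffunE.
case: (i < a) => /=; first by rewrite -f1; congr f; apply/ffunP => j; rewrite !ffunE.
case: (insub (i - a)) => [o|] /=; first by rewrite ffunE.
by rewrite -f0; congr f; apply/ffunP => j; rewrite !ffunE.
Qed.

Lemma Maj_negt L : odd L -> forall v : btuple L, Maj L (negt v) = ~~ Maj L v.
Proof.
move=> oddL v; rewrite /Maj hw_negt.
have : (hw v).*2 != L by apply: contraTneq oddL => <-; rewrite odd_double.
have := hw_le v; lia.
Qed.

(* Each coordinate where the majority is 1 has a column of weight at least
   (L + 1) / 2. *)
Lemma hw_colwise_Maj_bound L k (x : 'I_L -> btuple k) :
  hw (colwise (Maj L) x) * L.+1 <= (\sum_j hw (x j)) * 2.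
Proof.
have -> : \sum_j hw (x j) = \sum_(i < k) hw [ffun j => x j i].
  rewrite /hw exchange_big; apply: eq_bigr => i _.
  by apply: eq_bigr => j _; rewrite ffunE.
rewrite [hw (colwise _ _)]/hw !big_distrl; apply: leq_sum => i _.
by rewrite ffunE /Maj; case: ltnP => /=; lia.
Qed.

Lemma exists_hw_colwise_Maj_lt_double L k (x : 'I_L -> btuple k) : 0 < L ->
  (forall j, hw (x j) < hw (colwise (Maj L) x)) ->
  exists j, hw (colwise (Maj L) x) < (hw (x j)).*2.
Proof.
move=> L_gt0 below; set w := hw _ in below *.
suff /existsP [j] : [exists j, w < (hw (x j)).*2] by exists j.
apply/contraT => /existsPn small.
have sum_small : \sum_j hw (x j) * 2 <= \sum_(j < L) w.
  by apply: leq_sum => j _; move: (small j); rewrite -leqNgt -muln2.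
move: (hw_colwise_Maj_bound x) sum_small (below (Ordinal L_gt0)).
rewrite -/w sum_nat_const card_ord -big_distrl /=; nia.
Qed.

Lemma hw_colwise_extreme L k (f : bfun L) (x : 'I_L -> btuple k) :
  (forall j, (hw (x j) == 0) || (hw (x j) == k)) ->
  (hw (colwise f x) == 0) || (hw (colwise f x) == k).
Proof.
move=> extreme; have -> : colwise f x = [ffun=> f [ffun j => hw (x j) == k]].
  apply/ffunP => i; rewrite !ffunE; congr f; apply/ffunP => j; rewrite !ffunE.
  move: (extreme j); case xji: (x j i);
    [have := hw_gt0 xji | have := hw_ltn (negbT xji)]; case: eqP; lia.
by rewrite hw_const; case: (f _); rewrite ?mul1n ?mul0n eqxx ?orbT.
Qed.

Definition poly_subset (G : PFam) k (R : prel k) : Prop :=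
  forall L (f : bfun L), in_poly G f -> weak_poly R f.

Lemma not_in_poly_witness (G : PFam) L (f : bfun L) : ~ in_poly G f ->
  exists k (R : prel k), G k R /\
    exists x : 'I_L -> btuple k, (forall j, x j \in R.1) /\ colwise f x \notin R.2.
Proof.
move=> notf; apply: NNPP => none; apply: notf => k R GR x xR.
by apply/negPn/negP => yR; apply: none; exists k, R; split => //; exists x.
Qed.

Definition odd_half_prel k : prel k :=
  (Ham k (pred1 k.+1./2), Ham k (fun w => w \in iota 0 k)).

Definition one_or_all_prel k b : prel k :=
  (Ham k (fun w => (w == 1) || (w == k)),
   Ham k (fun w => (w \in iota 0 k.+1) && (w != b))).

Definition negrel k (R : prel k) : prel k := (@negt k @^-1: R.1, @negt k @^-1: R.2).

Section Obstruction.

Variable G : PFam.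
Hypothesis G_idem : idempotentF G.
Hypothesis G_fold : foldedF G.

Definition obstruction : Prop :=
  exists k (R : prel k), poly_subset G R /\
    ((odd k /\ 3 <= k /\ R = odd_half_prel k) \/
     (3 <= k /\ exists b, 2 <= b <= k.-1 /\ R = one_or_all_prel k b)).

Variable k : nat.

Lemma poly_subset_pad (R : prel k) a m (P Q : {set btuple m}) :
  poly_subset G R -> {in P, forall z, pad k a z \in R.1} ->
  (forall z, pad k a z \in R.2 -> z \in Q) -> poly_subset G (P, Q).
Proof.
move=> GR PR RQ L f fG x xP; change (colwise f x \in Q); apply: RQ.
have [f0 f1] := G_idem fG.
by rewrite -colwise_pad //; apply: (GR _ _ fG) => j; apply: PR (xP j).
Qed.

Section Gadgets.

Variable R : prel k.
Hypotheses (GR : poly_subset G R) (R1 : hw_invariant R.1) (R2 : hw_invariant R.2).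

(* The pad maps weights c + 1 and 2c + 1 to hw x and hw y. *)
Lemma odd_half_obstruction x y :
  x \in R.1 -> y \notin R.2 -> hw x < hw y < (hw x).*2 -> obstruction.
Proof.
move=> xR yR /andP [lt_xy lt_yx]; have y_le := hw_le y.
pose c := hw y - hw x; pose a := ((hw x).*2 - hw y).-1.
exists c.*2.+1, (odd_half_prel c.*2.+1); split; last first.
  by left; rewrite /= odd_double /c; do !split; lia.
apply: (poly_subset_pad (a := a) GR) => // [z|z pzR].
  rewrite mem_Ham -doubleS doubleK => /eqP hz.
  by rewrite (@R1 _ x) // hw_pad ?hz; rewrite /a /c; lia.
rewrite mem_Ham mem_iota add0n ltn_neqAle hw_le andbT.
by apply: contraTneq pzR => hz; rewrite (@R2 _ y) // hw_pad ?hz; rewrite /a /c; lia.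
Qed.

(* The pad maps weights 1, b and m to hw x1, hw y and hw x2. *)
Lemma one_or_all_obstruction x1 x2 y :
  x1 \in R.1 -> x2 \in R.1 -> y \notin R.2 ->
  0 < hw x1 < hw y -> hw y < hw x2 -> obstruction.
Proof.
move=> x1R x2R yR lt_x1y lt_yx2; have x2_le := hw_le x2.
pose m := (hw x2 - hw x1).+1; pose b := (hw y - hw x1).+1; pose a := (hw x1).-1.
exists m, (one_or_all_prel m b); split.
  apply: (poly_subset_pad (a := a) GR) => // [z|z pzR].
    rewrite mem_Ham => /orP [] /eqP hz; [rewrite (@R1 _ x1) | rewrite (@R1 _ x2)];
      by rewrite // hw_pad ?hz; lia.
  rewrite mem_Ham mem_iota add0n ltnS hw_le /=.
  by apply: contraTneq pzR => hz; rewrite (@R2 _ y) // hw_pad ?hz; lia.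
by right; split; [lia | exists b; split => //; lia].
Qed.

End Gadgets.

Definition admissible (R : prel k) : Prop :=
  [/\ poly_subset G R, hw_invariant R.1, hw_invariant R.2 & R.1 \subset R.2].

Lemma admissible_hw_neq (R : prel k) x y :
  admissible R -> x \in R.1 -> y \notin R.2 -> hw x != hw y.
Proof.
by case=> _ _ R2 PQ xR; apply: contraNneq => eq_xy; rewrite -(@R2 x) // (subsetP PQ).
Qed.

Lemma poly_subset_negrel (R : prel k) : poly_subset G R -> poly_subset G (negrel R).
Proof.
move=> GR L f fG x xR; rewrite inE; change (negt (colwise f x) \in R.2).
rewrite -colwise_negt; last exact: G_fold fG.
by apply: (GR _ _ fG) => j; move: (xR j); rewrite inE.
Qed.

Lemma admissible_negrel (R : prel k) : admissible R -> admissible (negrel R).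
Proof.
case=> GR R1 R2 PQ; split; rewrite ?preimsetS //.
- exact: poly_subset_negrel.
- exact: hw_invariant_preim_negt.
- exact: hw_invariant_preim_negt.
Qed.

(* Complementation turns hw x2 < k into 0 < k - hw x2. *)
Lemma two_sided_obstruction (R : prel k) x1 x2 y : admissible R ->
  x1 \in R.1 -> x2 \in R.1 -> y \notin R.2 -> hw x1 < hw y < hw x2 ->
  (0 < hw x1) || (hw x2 < k) -> obstruction.
Proof.
move=> admR x1R x2R yR /andP [lt_x1y lt_yx2] /orP [x1_gt0 | x2_lt].
  case: admR => GR R1 R2 _.
  by apply: (one_or_all_obstruction GR R1 R2 x1R x2R yR); rewrite ?x1_gt0.
case: (admissible_negrel admR) => GR R1 R2 _.
apply: (one_or_all_obstruction GR R1 R2 (x1 := negt x2) (x2 := negt x1) (y := negt y));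
  rewrite ?inE ?negtK // !hw_negt; have := hw_le x2; lia.
Qed.

Lemma Maj_counterexample_obstruction_below (R : prel k) L (x : 'I_L -> btuple k) j1 :
  admissible R -> (forall j, x j \in R.1) -> colwise (Maj L) x \notin R.2 ->
  hw (x j1) < hw (colwise (Maj L) x) -> obstruction.
Proof.
move=> admR xR; set y := colwise _ x => yR lt_j1.
have neq j : hw (x j) != hw y := admissible_hw_neq admR (xR j) yR.
have [/existsP [j2 lt_j2]|/existsPn le_y] := boolP [exists j, hw y < hw (x j)].
  have [/existsP [j /andP [x_gt0 x_lt]]|/existsPn extreme] :=
    boolP [exists j, 0 < hw (x j) < k].
    case: (ltngtP (hw (x j)) (hw y)) => [lt_jy|lt_yj|eq_jy].
    - by apply: (two_sided_obstruction admR (xR j) (xR j2) yR); rewrite ?lt_jy ?x_gt0.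
    - by apply: (two_sided_obstruction admR (xR j1) (xR j) yR); rewrite ?lt_j1 ?x_lt ?orbT.
    - by move: (neq j); rewrite eq_jy eqxx.
  have y_extreme : (hw y == 0) || (hw y == k).
    by apply: hw_colwise_extreme => j; move: (extreme j) (hw_le (x j)); lia.
  by move: y_extreme (hw_le (x j2)); lia.
have below j : hw (x j) < hw y by move: (le_y j) (neq j); lia.
have [j lt_yj] := exists_hw_colwise_Maj_lt_double (leq_ltn_trans (leq0n _) (ltn_ord j1)) below.
case: admR => GR R1 R2 _.
by apply: (odd_half_obstruction GR R1 R2 (xR j) yR); rewrite below.
Qed.

(* If no x j is lighter than the majority, complementing everything makes all
   of them lighter; complementation commutes with Maj L because L is odd. *)
Lemma Maj_counterexample_obstruction (R : prel k) L (x : 'I_L -> btuple k) :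
  odd L -> admissible R -> (forall j, x j \in R.1) ->
  colwise (Maj L) x \notin R.2 -> obstruction.
Proof.
move=> oddL admR xR yR; have j0 : 'I_L by case: (L) oddL => // n _; exact: ord0.
have [/existsP [j lt_j]|/existsPn ge] :=
  boolP [exists j, hw (x j) < hw (colwise (Maj L) x)].
  exact: Maj_counterexample_obstruction_below admR xR yR lt_j.
have xR' j : negt (x j) \in (negrel R).1 by rewrite inE negtK.
have yR' : colwise (Maj L) (fun j => negt (x j)) \notin (negrel R).2.
  by rewrite inE colwise_negt ?negtK //; apply: Maj_negt.
apply: (Maj_counterexample_obstruction_below (admissible_negrel admR) xR' yR' (j1 := j0)).
rewrite colwise_negt; last exact: Maj_negt.
rewrite !hw_negt; move: (ge j0) (admissible_hw_neq admR (xR j0) yR).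
by have := hw_le (x j0); lia.
Qed.

End Obstruction.

Theorem lemma4p6 (G : PFam) :
  (forall k (R : prel k), G k R -> is_promise R) ->
  symmetricF G -> foldedF G -> idempotentF G ->
  (exists L, odd L /\ 0 < L /\ ~ in_poly G (Maj L)) ->
  exists (k : nat) (R : prel k),
    (forall L (f : bfun L), in_poly G f -> weak_poly R f) /\
    ( (odd k /\ 3 <= k /\
       R = (Ham k (pred1 (k.+1./2)), Ham k (fun w => w \in iota 0 k)))
    \/
      (3 <= k /\ exists b, 2 <= b <= k.-1 /\
       R = (Ham k (fun w => (w == 1) || (w == k)),
            Ham k (fun w => (w \in iota 0 k.+1) && (w != b))))).
Proof.
move=> G_promise G_sym G_fold G_idem [L [oddL [_ notMaj]]].
have [k [R [GR [x [xR yR]]]]] := not_in_poly_witness notMaj.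
have R_perm := G_sym k R GR.
apply: (Maj_counterexample_obstruction G_idem G_fold oddL _ xR yR); split.
- by move=> L' f fG; apply: fG _ _ GR.
- by apply: perm_invariant_hw_invariant => s z; case: (R_perm s z).
- by apply: perm_invariant_hw_invariant => s z; case: (R_perm s z).
- exact: G_promise GR.
Qed.
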